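(* Consider the plant $x_{k+1}=f(x_k,u_k)$ and the sets, symbolic model, $\widetilde P_S$ and $\widetilde C$ described in the context, with $\varepsilon\ge\eta_x$. Let $P_S=\{x\in X_S:\exists\tilde x\in\widetilde P_S,\ \|\tilde x-x\|\le\varepsilon\}$ and define the self-triggered controller, for $x\in P_S$, $$C(x)=\bigcup\{\widetilde C(\tilde x):\ \tilde x\in\mathsf{Nearest}_{\widetilde P_S}(x)\}.$$ If $X_0\subseteq P_S$, then $C$ is valid for the plant with specification $(X_S,X_F)$: for every $x_0\in X_0$ and every controlled trajectory $x_0,x_1,\dots$ induced by $C$ (with communication times $k_0=0<k_1<\cdots$), there exists $N\in\mathbb{N}_{\ge0}$ such that $x_{k_N}\in X_F$ and $x_k\in X_S$ for all $k\in\{0,1,\dots,k_N\}$.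
   Context: Standing setup: plant $x_{k+1}=f(x_k,u_k)$ with $f:\mathbb{R}^{n_x}\times\mathbb{R}^{n_u}\to\mathbb{R}^{n_x}$, compact initial set $X_0$, compact input set $U$, and $L_x\ge0$ with $\|f(x_1,u)-f(x_2,u)\|\le L_x\|x_1-x_2\|$ for all $x_1,x_2\in\mathbb{R}^{n_x}$, $u\in U$. Compact (possibly non-convex) safety set $X_S$ and target set $X_F$ with $X_0\subseteq X_S$, $X_F\subseteq X_S$. $\|\cdot\|$ Euclidean norm; $\mathcal{B}_r(y)=\{y':\|y'-y\|\le r\}$; $\mathsf{Int}_\varepsilon(Y)=\{y\in Y:\mathcal{B}_\varepsilon(y)\subseteq Y\}$; $\mathsf{Nearest}_Y(x)=\arg\min_{y\in Y}\|x-y\|$. $\phi(x,u,m)$ is the state reached from $x$ by applying $u$ constantly for $m\ge1$ steps of $x_{k+1}=f(x_k,u)$. Lattice: $[Y]_\eta=\{y\in Y: y_i=\frac{2\eta}{\sqrt n}a_i,\ a_i\in\mathbb{Z}\}$. Symbolic model for $\eta_x,\eta_u>0$, $M_{\max}\in\mathbb{N}_{>0}$, $\varepsilon\ge\eta_x$: $\widetilde X=[\mathbb{R}^{n_x}]_{\eta_x}$, $\widetilde X_0=[X_0]_{\eta_x}$, $\widetilde U=[U]_{\eta_u}$, $\widetilde M=\{1,\dots,M_{\max}\}$; $\tilde x^+\in\widetilde G_A(\tilde x,\tilde u,\tilde m)$ iff $\tilde x^+\in\widetilde X$ and $\|\tilde x^+-\phi(\tilde x,\tilde u,\tilde m)\|\le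 L_x^{\tilde m}\varepsilon+\eta_x$; $(\tilde x_1,\dots,\tilde x_{\tilde m})\in\widetilde O_A(\tilde x,\tilde u,\tilde m)$ iff $\tilde x_p\in\widetilde G_A(\tilde x,\tilde u,p)$ for $p=1,\dots,\tilde m$. Let $\widetilde X_S=[\mathsf{Int}_\varepsilon(X_S)]_{\eta_x}$, $\widetilde X_F=[\mathsf{Int}_\varepsilon(X_F)]_{\eta_x}$; $\widetilde O_A(\cdot)\subseteq\widetilde X_S^*$ means every sequence in it has all entries in $\widetilde X_S$. $\mathrm{Pre}(P)=\{\tilde x\in\widetilde X_S:\exists(\tilde u,\tilde m)\in\widetilde U\times\widetilde M$ with $\widetilde G_A(\tilde x,\tilde u,\tilde m)\subseteq P$ and $\widetilde O_A(\tilde x,\tilde u,\tilde m)\subseteq\widetilde X_S^*\}$ for $P\subseteq\widetilde X_S$. $P^{(0)}=\widetilde X_F$, $P^{(n+1)}=P^{(n)}\cup\mathrm{Pre}(P^{(n)})$ iterated to a fixed point $\widetilde P_S$. $\mathcal{L}(\tilde x)=0$ on $\widetilde X_F$, $\mathcal{L}(\tilde x)=n+1$ on $P^{(n+1)}\setminus P^{(n)}$, $\mathcal{L}=\infty$ on $\widetilde X_S\setminus\widetilde P_S$. For $\tilde x\in\widetilde P_S$: $\widetilde C(\tilde x)=\{(\tilde u,\tilde m)\in\widetilde U\times\widetilde M:\mathcal{L}(\tilde x^+)<\mathcal{L}(\tilde x)\ \forall\tilde x^+\in\widetilde G_A(\tilde x,\tilde u,\tilde m),\ \widetilde O_A(\tilde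 x,\tilde u,\tilde m)\subseteq\widetilde X_S^*\}$. Self-triggered execution / controlled trajectory induced by $C$: $x_0\in X_0$, $k_0=0$; at each communication time $k_\ell$ a pair $(u_{k_\ell},m_\ell)\in C(x_{k_\ell})$ is chosen, $u_k=u_{k_\ell}$ for $k=k_\ell,\dots,k_{\ell+1}-1$, $x_{k+1}=f(x_k,u_{k_\ell})$, and $k_{\ell+1}=k_\ell+m_\ell$. *)

From mathcomp Require Import ssreflect ssrfun ssrbool eqtype ssrnat seq fintype bigop.
From Stdlib Require Import Reals ZArith ClassicalEpsilon.
Open Scope R_scope.

Definition vec (n : nat) : Type := 'I_n -> R.

Definition vnorm {n : nat} (v : vec n) : R :=
  sqrt (\big[Rplus/0%R]_(i < n) (v i * v i)).
Definition vdist {n : nat} (x y : vec n) : R := vnorm (fun i => x i - y i).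

Definition compact_set {n : nat} (A : vec n -> Prop) : Prop :=
  forall u : nat -> vec n, (forall k, A (u k)) ->
  exists (sub : nat -> nat) (l : vec n),
    (forall k, Peano.lt (sub k) (sub (S k))) /\ A l /\
    (forall e, 0 < e -> exists N, forall k, Peano.le N k -> vdist (u (sub k)) l < e).

Definition Int_eps {n : nat} (eps : R) (Y : vec n -> Prop) (y : vec n) : Prop :=
  Y y /\ (forall y', vdist y' y <= eps -> Y y').

Definition lattice {n : nat} (eta : R) (Y : vec n -> Prop) (y : vec n) : Prop :=
  Y y /\ (forall i : 'I_n, exists a : Z, y i = 2 * eta / sqrt (INR n) * IZR a).

Definition phi {nx nu : nat} (f : vec nx -> vec nu -> vec nx)
  (x : vec nx) (u : vec nu) (m : nat) : vec nx :=
  Nat.iter m (fun y => f y u) x.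

Definition GA {nx nu : nat} (f : vec nx -> vec nu -> vec nx) (Lx etax eps : R)
  (x : vec nx) (u : vec nu) (m : nat) (xp : vec nx) : Prop :=
  lattice etax (fun _ => True) xp /\
  vdist xp (phi f x u m) <= Lx ^ m * eps + etax.

(* O_A(x,u,m) \subseteq Y^* : every sequence (x_1,..,x_m) with x_p in G_A(x,u,p)
   has all its entries in Y *)
Definition OA_sub {nx nu : nat} (f : vec nx -> vec nu -> vec nx) (Lx etax eps : R)
  (x : vec nx) (u : vec nu) (m : nat) (Y : vec nx -> Prop) : Prop :=
  forall s : nat -> vec nx,
    (forall p, Peano.le 1 p -> Peano.le p m -> GA f Lx etax eps x u p (s p)) ->
    forall p, Peano.le 1 p -> Peano.le p m -> Y (s p).

Definition XtS {nx : nat} (etax eps : R) (XS : vec nx -> Prop) : vec nx -> Prop :=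
  lattice etax (Int_eps eps XS).
Definition XtF {nx : nat} (etax eps : R) (XF : vec nx -> Prop) : vec nx -> Prop :=
  lattice etax (Int_eps eps XF).

Definition Pre {nx nu : nat} (f : vec nx -> vec nu -> vec nx) (Lx etax etau eps : R)
  (Mmax : nat) (U XS : vec _ -> Prop) (P : vec nx -> Prop) (x : vec nx) : Prop :=
  XtS etax eps XS x /\
  exists (u : vec nu) (m : nat),
    lattice etau U u /\ Peano.le 1 m /\ Peano.le m Mmax /\
    (forall xp, GA f Lx etax eps x u m xp -> P xp) /\
    OA_sub f Lx etax eps x u m (XtS etax eps XS).

Fixpoint Piter {nx nu : nat} (f : vec nx -> vec nu -> vec nx) (Lx etax etau eps : R)
  (Mmax : nat) (U : vec nu -> Prop) (XS XF : vec nx -> Prop) (k : nat) : vec nx -> Prop :=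
  match k with
  | O => XtF etax eps XF
  | S k' => fun x => Piter f Lx etax etau eps Mmax U XS XF k' x \/
                     Pre f Lx etax etau eps Mmax U XS (Piter f Lx etax etau eps Mmax U XS XF k') x
  end.

(* the fixed point P~_S of the (monotone) iteration = union of all P^(k) *)
Definition PtS {nx nu : nat} (f : vec nx -> vec nu -> vec nx) (Lx etax etau eps : R)
  (Mmax : nat) (U : vec nu -> Prop) (XS XF : vec nx -> Prop) (x : vec nx) : Prop :=
  exists k, Piter f Lx etax etau eps Mmax U XS XF k x.

(* level function L: the index k at which x enters P^(k) (Some 0 on X~_F,
   Some (k+1) on P^(k+1) \ P^(k)), None (= infinity) if never *)
Definition level {nx : nat} (P : nat -> vec nx -> Prop) (x : vec nx) : option nat :=
  match excluded_middle_informative (exists k, P k x) with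
  | left _ => Some (epsilon (inhabits 0%nat)
                     (fun k => P k x /\ forall j, P j x -> Peano.le k j))
  | right _ => None
  end.

Definition lvl_lt (a b : option nat) : Prop :=
  match a, b with
  | Some a', Some b' => Peano.lt a' b'
  | Some _, None => True
  | None, _ => False
  end.

Definition Ctil {nx nu : nat} (f : vec nx -> vec nu -> vec nx) (Lx etax etau eps : R)
  (Mmax : nat) (U : vec nu -> Prop) (XS XF : vec nx -> Prop)
  (xt : vec nx) (u : vec nu) (m : nat) : Prop :=
  PtS f Lx etax etau eps Mmax U XS XF xt /\
  lattice etau U u /\ Peano.le 1 m /\ Peano.le m Mmax /\
  (forall xp, GA f Lx etax eps xt u m xp ->
     lvl_lt (level (Piter f Lx etax etau eps Mmax U XS XF) xp)
            (level (Piter f Lx etax etau eps Mmax U XS XF) xt)) /\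
  OA_sub f Lx etax eps xt u m (XtS etax eps XS).

Definition PS {nx nu : nat} (f : vec nx -> vec nu -> vec nx) (Lx etax etau eps : R)
  (Mmax : nat) (U : vec nu -> Prop) (XS XF : vec nx -> Prop) (x : vec nx) : Prop :=
  XS x /\ exists xt, PtS f Lx etax etau eps Mmax U XS XF xt /\ vdist xt x <= eps.

Definition Nearest {n : nat} (Y : vec n -> Prop) (x y : vec n) : Prop :=
  Y y /\ forall y', Y y' -> vdist x y <= vdist x y'.

Definition Cctrl {nx nu : nat} (f : vec nx -> vec nu -> vec nx) (Lx etax etau eps : R)
  (Mmax : nat) (U : vec nu -> Prop) (XS XF : vec nx -> Prop)
  (x : vec nx) (u : vec nu) (m : nat) : Prop :=
  PS f Lx etax etau eps Mmax U XS XF x /\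
  exists xt, Nearest (PtS f Lx etax etau eps Mmax U XS XF) x xt /\
             Ctil f Lx etax etau eps Mmax U XS XF xt u m.

(* communication round l is executed: T = None means infinitely many rounds,
   T = Some t means rounds 0..t-1 are executed and then the controller offers
   no admissible pair at x_{k_t} (the execution cannot be continued) *)
Definition executed (T : option nat) (l : nat) : Prop :=
  match T with None => True | Some t => Peano.lt l t end.

Definition controlled_traj {nx nu : nat} (f : vec nx -> vec nu -> vec nx)
  (C : vec nx -> vec nu -> nat -> Prop) (X0 : vec nx -> Prop)
  (x : nat -> vec nx) (kk : nat -> nat) (us : nat -> vec nu) (ms : nat -> nat)
  (T : option nat) : Prop :=
  X0 (x 0%nat) /\ kk 0%nat = 0%nat /\
  (forall l, executed T l ->
     C (x (kk l)) (us l) (ms l) /\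
     kk (S l) = (kk l + ms l)%nat /\
     (forall k, Peano.le (kk l) k -> Peano.lt k (kk (S l)) -> x (S k) = f (x k) (us l))) /\
  (forall t, T = Some t -> forall u m, ~ C (x (kk t)) u m).

Definition valid {nx nu : nat} (f : vec nx -> vec nu -> vec nx)
  (C : vec nx -> vec nu -> nat -> Prop) (X0 XS XF : vec nx -> Prop) : Prop :=
  forall x kk us ms T, controlled_traj f C X0 x kk us ms T ->
  exists N : nat,
    (forall t, T = Some t -> Peano.le N t) /\
    XF (x (kk N)) /\
    (forall k, Peano.le k (kk N) -> XS (x k)).

From HB Require Import structures.
From mathcomp Require Import ssreflect ssrfun ssrbool eqtype ssrnat seq fintype bigop finfun zify.
From Stdlib Require Import Reals ZArith ClassicalEpsilon Lra Lia FunctionalExtensionality.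
Open Scope R_scope.
Set Implicit Arguments.
Unset Strict Implicit.

(* The proof rests on the level function L of the symbolic fixed point P~_S
   decreasing strictly from one communication time to the next.  Let x be the
   state at a communication time, x~ a nearest point of P~_S (so |x - x~| <= eps)
   and (u, m) in C~(x~).  By Lipschitz continuity |phi(x,u,p) - phi(x~,u,p)|
   <= Lx^p eps, so every lattice point within eta_x of phi(x,u,p) is a
   successor of x~ in G_A(x~,u,p).  Rounding phi(x,u,p) to the lattice then
   shows (i) phi(x,u,p) lies in X_S, because O_A(x~,u,m) lies in
   Int_eps(X_S); (ii) phi(x,u,m) lies in P_S; (iii) every nearest point of
   P~_S to phi(x,u,m) has a smaller level than x~.  Hence every execution
   stops after finitely many rounds, and where it stops the controller offers
   no pair, which forces the nearest abstract point to have level 0, i.e. to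
   lie in Int_eps(X_F), so the state lies in X_F. *)

(** * Euclidean geometry on [vec n] *)

(* (R, +, 0) is a commutative monoid, so the bigop lemmas apply to the sum
   defining [vnorm]. *)
Lemma Rplus_associative : associative Rplus.
Proof. by move=> a b c; ring. Qed.

HB.instance Definition _ :=
  Monoid.isComLaw.Build R 0 Rplus Rplus_associative Rplus_comm Rplus_0_l.

Notation rsum n F := (\big[Rplus/0]_(i < n) F i).

Lemma rsum_le n (F G : 'I_n -> R) : (forall i, F i <= G i) -> rsum n F <= rsum n G.
Proof. by move=> FG; apply: (big_ind2 (fun a b => a <= b)) => //; [lra | move=> *; lra]. Qed.

Lemma rsum_ge0 n (F : 'I_n -> R) : (forall i, 0 <= F i) -> 0 <= rsum n F.
Proof. by move=> F0; apply: (big_ind (fun a => 0 <= a)) => //; [lra | move=> *; lra]. Qed.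

Lemma rsum_scal n c (F : 'I_n -> R) : rsum n (fun i => c * F i) = c * rsum n F.
Proof. by apply: (big_ind2 (fun a b => a = c * b)) => //; [ring | move=> ? ? ? ? -> ->; ring]. Qed.

Lemma rsum_const n c : rsum n (fun _ => c) = INR n * c.
Proof.
rewrite big_const_ord; elim: n => [|n IH]; first by rewrite /=; ring.
by rewrite S_INR iterS IH; ring.
Qed.

Lemma rsum_term_le n (F : 'I_n -> R) j : (forall i, 0 <= F i) -> F j <= rsum n F.
Proof.
move=> F0; rewrite (bigD1 j) //=.
have : 0 <= \big[Rplus/0]_(i < n | i != j) F i.
  by apply: (big_ind (fun a => 0 <= a)) => //; [lra | move=> *; lra].
by move=> rest0; rewrite -{1}(Rplus_0_r (F j)); apply: Rplus_le_compat_l.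
Qed.

Definition dot n (v w : vec n) : R := rsum n (fun i => v i * w i).

Lemma vnorm_dot n (v : vec n) : vnorm v = sqrt (dot v v).
Proof. by []. Qed.

Lemma dot_self_ge0 n (v : vec n) : 0 <= dot v v.
Proof. by apply: rsum_ge0 => i; nra. Qed.

Lemma nonneg_quadratic_discr A B C :
  0 <= C -> (forall t, 0 <= A + 2 * t * B + t * t * C) -> B * B <= A * C.
Proof.
move=> C0 Q; have A0 : 0 <= A by have := Q 0; lra.
have [C_eq0 | C_pos] : C = 0 \/ 0 < C by lra.
- have [B_eq0 | B_neq0] := Req_dec B 0; first by rewrite B_eq0 C_eq0; nra.
  have := Q (- (A + 1) / (2 * B)); rewrite C_eq0.
  have -> : A + 2 * (- (A + 1) / (2 * B)) * B + - (A + 1) / (2 * B) * (- (A + 1) / (2 * B)) * 0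
            = -1 by field.
  lra.
- have := Q (- B / C).
  have -> : A + 2 * (- B / C) * B + - B / C * (- B / C) * C = (A * C - B * B) / C by field; lra.
  move=> H; have : 0 <= (A * C - B * B) / C * C by apply: Rmult_le_pos; lra.
  have -> : (A * C - B * B) / C * C = A * C - B * B by field; lra.
  lra.
Qed.

Lemma cauchy_schwarz n (v w : vec n) : dot v w <= vnorm v * vnorm w.
Proof.
have expand t : dot (fun i => v i + t * w i) (fun i => v i + t * w i)
                = dot v v + 2 * t * dot v w + t * t * dot w w.
  rewrite /dot -!rsum_scal -!big_split /=; apply: eq_bigr => i _; ring.
have discr : dot v w * dot v w <= dot v v * dot w w.
  apply: nonneg_quadratic_discr; first exact: dot_self_ge0.
  by move=> t; rewrite -expand; exact: dot_self_ge0.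
rewrite !vnorm_dot -sqrt_mult; try exact: dot_self_ge0.
apply: (Rle_trans _ (Rabs (dot v w))); first exact: Rle_abs.
by rewrite -sqrt_Rsqr_abs; apply: sqrt_le_1_alt; rewrite /Rsqr.
Qed.

Lemma vnorm_triangle n (v w : vec n) : vnorm (fun i => v i + w i) <= vnorm v + vnorm w.
Proof.
have nv := sqrt_pos (dot v v); have nw := sqrt_pos (dot w w).
rewrite !vnorm_dot -(sqrt_square (sqrt (dot v v) + sqrt (dot w w))); last lra.
apply: sqrt_le_1_alt.
have -> : dot (fun i => v i + w i) (fun i => v i + w i) = dot v v + 2 * dot v w + dot w w.
  rewrite /dot -rsum_scal -!big_split /=; apply: eq_bigr => i _; ring.
have := cauchy_schwarz v w; rewrite !vnorm_dot.
have := sqrt_sqrt _ (dot_self_ge0 v); have := sqrt_sqrt _ (dot_self_ge0 w).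
nra.
Qed.

Lemma vdist_sym n (a b : vec n) : vdist a b = vdist b a.
Proof. by rewrite /vdist /vnorm; f_equal; apply: eq_bigr => i _; ring. Qed.

Lemma vdist_triangle n (a b c : vec n) : vdist a c <= vdist a b + vdist b c.
Proof.
have := vnorm_triangle (fun i => a i - b i) (fun i => b i - c i).
rewrite /vdist /vnorm; congr (sqrt _ <= _).
by apply: eq_bigr => i _; ring.
Qed.

Lemma vdist_coord n (a b : vec n) i : Rabs (a i - b i) <= vdist a b.
Proof.
rewrite /vdist /vnorm -(sqrt_Rsqr_abs (a i - b i)); apply: sqrt_le_1_alt.
by rewrite /Rsqr; apply: rsum_term_le => k; apply: Rle_0_sqr.
Qed.

Lemma vdist_dim0 (a b : vec 0) : vdist a b = 0.
Proof. by rewrite /vdist /vnorm big_ord0 sqrt_0. Qed.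

(** * The lattice [[R^n]_eta]: rounding and nearest points *)

Notation on_grid eta z := (lattice eta (fun _ => True) z).

Definition grid_step (n : nat) (eta : R) : R := 2 * eta / sqrt (INR n).

Lemma grid_step_pos n eta : (0 < n)%nat -> 0 < eta -> 0 < grid_step n eta.
Proof.
move=> n_pos eta_pos; apply: Rdiv_lt_0_compat; first lra.
by apply: sqrt_lt_R0; apply: lt_0_INR; lia.
Qed.

Lemma round_multiple_err h t :
  0 < h -> Rsqr (h * IZR (up (t / h - / 2)) - t) <= Rsqr (h / 2).
Proof.
move=> h_pos; have [up_gt up_le] := archimed (t / h - / 2).
set a := IZR (up (t / h - / 2)) in up_gt up_le *.
have -> : h * a - t = h * (a - t / h) by field; lra.
apply: Rsqr_le_abs_1; rewrite Rabs_mult Rabs_right; last lra.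
rewrite (Rabs_right (h / 2)); last lra.
have : Rabs (a - t / h) <= / 2 by apply: Rabs_le; lra.
nra.
Qed.

Definition round_grid n (eta : R) (y : vec n) : vec n :=
  fun i => grid_step n eta * IZR (up (y i / grid_step n eta - / 2)).

(* Every point is within eta of a lattice point: this is why the lattice
   [[R^n]_eta] uses the spacing 2 eta / sqrt n. *)
Lemma round_grid_spec n eta (y : vec n) :
  0 < eta -> on_grid eta (round_grid eta y) /\ vdist (round_grid eta y) y <= eta.
Proof.
move=> eta_pos; split; first by split=> // i; eexists.
case: n y => [|n] y; first by rewrite vdist_dim0; lra.
set h := grid_step n.+1 eta.
have h_pos : 0 < h by apply: grid_step_pos => //; lia.
have n_pos : 0 < INR n.+1 by apply: lt_0_INR; lia.
have h_sq : INR n.+1 * Rsqr (h / 2) = eta * eta.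
  rewrite /h /grid_step /Rsqr; field_simplify; last by have := sqrt_lt_R0 _ n_pos; lra.
  by rewrite !pow2_sqrt ?Rmult_1_r; [field; lra | lra].
apply: (Rle_trans _ (sqrt (eta * eta))); last by rewrite sqrt_square; lra.
apply: sqrt_le_1_alt; rewrite -h_sq -rsum_const.
by apply: rsum_le => i; exact: (round_multiple_err (y i) h_pos).
Qed.

Lemma mem_In (T : eqType) (x : T) (s : seq T) : x \in s -> List.In x s.
Proof.
elim: s => // y s IH; rewrite in_cons => /orP [/eqP -> | x_in]; [by left | right; exact: IH].
Qed.

Lemma lattice_ball_finite n eta r (y : vec n) :
  0 < eta -> exists L : list (vec n),
    forall z, on_grid eta z -> vdist z y <= r -> List.In z L.
Proof.
move=> eta_pos; case: n y => [|n] y.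
  exists [:: y] => z _ _; left.
  by apply: functional_extensionality => -[].
set h := grid_step n.+1 eta.
have h_pos : 0 < h by apply: grid_step_pos => //; lia.
(* integer coordinates of the ball lie in [lo i, lo i + up s) *)
pose lo i := (up ((y i - r) / h) - 1)%Z.
pose s := 2 * r / h + 1.
pose K := Z.to_nat (up s).
pose decode (F : {ffun 'I_n.+1 -> 'I_K.+1}) : vec n.+1 :=
  fun i => h * IZR (lo i + Z.of_nat (F i)).
exists (List.map decode (enum {ffun 'I_n.+1 -> 'I_K.+1})) => z [_ z_grid] z_near.
pose a i := epsilon (inhabits 0%Z) (fun a => z i = h * IZR a).
have z_a i : z i = h * IZR (a i).
  exact: (epsilon_spec (inhabits 0%Z) (fun a => z i = h * IZR a) (z_grid i)).
have a_range i : (lo i <= a i)%Z /\ (a i - lo i < up s)%Z.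
  have [lb ub] : - r <= h * IZR (a i) - y i <= r.
    have := vdist_coord z y i; rewrite z_a.
    have := Rle_abs (h * IZR (a i) - y i); have := Rle_abs (- (h * IZR (a i) - y i)).
    rewrite Rabs_Ropp; lra.
  have [lo_gt lo_le] := archimed ((y i - r) / h).
  have [s_gt s_le] := archimed s.
  have a_lb : (y i - r) / h <= IZR (a i).
    by apply: (Rmult_le_reg_r h) => //; field_simplify; lra.
  have a_ub : IZR (a i) <= (y i - r) / h + 2 * r / h.
    by apply: (Rmult_le_reg_r h) => //; field_simplify; lra.
  split; [apply: le_IZR | apply: lt_IZR]; rewrite /lo ?minus_IZR /s in s_gt *; lra.
apply/List.in_map_iff; exists [ffun i => inord (Z.to_nat (a i - lo i))]; split.
  apply: functional_extensionality => i; rewrite /decode ffunE.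
  have [a_lo a_hi] := a_range i.
  by rewrite inordK ?Z2Nat.id /K; [rewrite z_a; do 2 f_equal; lia | lia | lia].
by apply: mem_In; rewrite mem_enum.
Qed.

Lemma list_argmin (A : Type) (g : A -> R) (a0 : A) (L : list A) :
  List.In a0 L -> exists a, List.In a L /\ forall b, List.In b L -> g a <= g b.
Proof.
elim: L a0 => // x [|y L] IH a0 _.
  by exists x; split; [left | move=> b [<-|//]; lra].
have [a [a_in a_min]] := IH y (or_introl erefl).
have [gx_le | gx_gt] := Rle_lt_dec (g x) (g a).
- exists x; split; first by left.
  by move=> b [<- | b_in]; [lra | have := a_min b b_in; lra].
- exists a; split; first by right.
  by move=> b [<- | b_in]; [lra | exact: a_min].
Qed.

Lemma nearest_in_lattice_set n eta r (P : vec n -> Prop) (y : vec n) :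
  0 < eta -> (forall z, P z -> on_grid eta z) ->
  (exists z, P z /\ vdist z y <= r) -> exists z, Nearest P y z.
Proof.
move=> eta_pos P_grid [z0 [P_z0 z0_near]].
have [L L_ball] := lattice_ball_finite r y eta_pos.
pose near z := if excluded_middle_informative (P z /\ vdist z y <= r) then true else false.
have near_spec z : near z = true <-> P z /\ vdist z y <= r.
  by rewrite /near; case: excluded_middle_informative.
have in_near z : P z -> vdist z y <= r -> List.In z (List.filter near L).
  move=> P_z z_near; apply/List.filter_In; split; last exact/near_spec.
  by apply: L_ball => //; apply: P_grid.
have [z [/List.filter_In [_ /near_spec [P_z z_near]] z_min]] :=
  list_argmin (vdist y) (in_near z0 P_z0 z0_near).
exists z; split=> // z' P_z'; rewrite ![vdist y _]vdist_sym.
have [z'_near | z'_far] := Rle_lt_dec (vdist z' y) r; last lra.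
by rewrite -![vdist _ y]vdist_sym; apply: z_min; apply: in_near.
Qed.

Lemma phi_lipschitz nx nu (f : vec nx -> vec nu -> vec nx) Lx u a b p :
  0 <= Lx -> (forall x1 x2, vdist (f x1 u) (f x2 u) <= Lx * vdist x1 x2) ->
  vdist (phi f a u p) (phi f b u p) <= Lx ^ p * vdist a b.
Proof.
move=> Lx_ge0 f_lip; elim: p => [|p IH]; first by rewrite /=; lra.
apply: (Rle_trans _ _ _ (f_lip _ _)); rewrite /= Rmult_assoc.
exact: Rmult_le_compat_l.
Qed.

Lemma level_spec nx (P : nat -> vec nx -> Prop) x k :
  level P x = Some k -> P k x /\ forall j, P j x -> Peano.le k j.
Proof.
rewrite /level; case: excluded_middle_informative => // -[k0 Pk0] [<-].
apply: (epsilon_spec (inhabits 0%nat) (fun k => P k x /\ forall j, P j x -> Peano.le k j)).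
elim/lt_wf_ind: k0 Pk0 => k0 IH Pk0.
case: (classic (exists j, Peano.lt j k0 /\ P j x)) => [[j [j_lt Pj]] | no_lower].
- exact: IH j_lt Pj.
- exists k0; split=> // j Pj; case: (Nat.le_gt_cases k0 j) => // j_lt.
  by case: no_lower; exists j.
Qed.

Lemma level_le nx (P : nat -> vec nx -> Prop) x k :
  P k x -> exists j, level P x = Some j /\ Peano.le j k.
Proof.
move=> Pk; have : exists j, level P x = Some j.
  by rewrite /level; case: excluded_middle_informative => [_ | []]; [eexists | exists k].
move=> [j Ej]; have [_ j_min] := level_spec Ej.
by exists j; split=> //; exact: j_min _ Pk.
Qed.

Lemma lvl_lt_staged nx (P : nat -> vec nx -> Prop) x b :
  lvl_lt (level P x) b -> exists k, P k x.
Proof. by rewrite /level; case: excluded_middle_informative. Qed.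

Lemma PtS_on_grid nx nu f Lx etax etau eps Mmax U XS XF (z : vec nx) :
  @PtS nx nu f Lx etax etau eps Mmax U XS XF z -> on_grid etax z.
Proof.
move=> [k]; elim: k z => [|k IH] z /=; first by move=> [_ z_grid].
by move=> [/IH // | [[_ z_grid] _]].
Qed.

(** * One round of the self-triggered controller *)

Section Controller.

Variables (nx nu : nat) (f : vec nx -> vec nu -> vec nx) (U : vec nu -> Prop)
  (XS XF : vec nx -> Prop) (Lx etax etau eps : R) (Mmax : nat).

Hypothesis hLx : 0 <= Lx.
Hypothesis hLip : forall x1 x2 u, U u -> vdist (f x1 u) (f x2 u) <= Lx * vdist x1 x2.
Hypothesis hetax : 0 < etax.
Hypothesis heps : etax <= eps.

Local Notation Pit := (Piter f Lx etax etau eps Mmax U XS XF).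
Local Notation Pt := (PtS f Lx etax etau eps Mmax U XS XF).
Local Notation PSet := (PS f Lx etax etau eps Mmax U XS XF).
Local Notation Ct := (Ctil f Lx etax etau eps Mmax U XS XF).
Local Notation Ctrl := (Cctrl f Lx etax etau eps Mmax U XS XF).

Lemma nearest_close y xt : PSet y -> Nearest Pt y xt -> vdist y xt <= eps.
Proof.
move=> [_ [z [Pt_z z_near]]] [_ xt_min].
by have := xt_min z Pt_z; rewrite (vdist_sym y z); lra.
Qed.

(* Nearest points of P~_S exist: P~_S is a lattice set meeting the
   eps-ball around every point of P_S. *)
Lemma nearest_exists y : PSet y -> exists xt, Nearest Pt y xt.
Proof.
move=> [_ y_near]; apply: nearest_in_lattice_set hetax _ y_near.
exact: PtS_on_grid.
Qed.

Lemma shadow_successor y xt u p z :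
  U u -> vdist y xt <= eps -> on_grid etax z -> vdist z (phi f y u p) <= etax ->
  GA f Lx etax eps xt u p z.
Proof.
move=> Uu y_xt z_grid z_near; split=> //.
have := vdist_triangle z (phi f y u p) (phi f xt u p).
have := phi_lipschitz y xt p hLx (fun a b => hLip a b Uu).
have := Rmult_le_compat_l _ _ _ (pow_le _ p hLx) y_xt.
lra.
Qed.

Lemma round_step y xt u m :
  PSet y -> Nearest Pt y xt -> Ct xt u m ->
  (forall p, Peano.le 1 p -> Peano.le p m -> XS (phi f y u p)) /\
  PSet (phi f y u m) /\
  (forall xt', Nearest Pt (phi f y u m) xt' -> lvl_lt (level Pit xt') (level Pit xt)).
Proof.
move=> PS_y near_xt [_ [[Uu _] [m_ge1 [_ [lvl_down OA_safe]]]]].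
have y_xt := nearest_close PS_y near_xt.
pose z p := round_grid etax (phi f y u p).
have z_near p : vdist (z p) (phi f y u p) <= etax := (round_grid_spec _ hetax).2.
have z_succ p : GA f Lx etax eps xt u p (z p).
  exact: shadow_successor Uu y_xt (round_grid_spec _ hetax).1 (z_near p).
have safe p : Peano.le 1 p -> Peano.le p m -> XS (phi f y u p).
  move=> p_ge1 p_le; have [[_ z_int] _] := OA_safe z (fun q _ _ => z_succ q) p p_ge1 p_le.
  by apply: z_int; rewrite vdist_sym; have := z_near p; lra.
(* the rounded end point is a successor of x~, so it has a level *)
have Pt_zm : Pt (z m).
  by have [k Pk] := lvl_lt_staged (lvl_down _ (z_succ m)); exists k.
split; [exact: safe | split].
- split; first exact: safe.
  by exists (z m); split=> //; have := z_near m; lra.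
- move=> xt' [Pt_xt' xt'_min]; apply: lvl_down.
  apply: (shadow_successor Uu y_xt (PtS_on_grid Pt_xt')).
  by have := xt'_min _ Pt_zm; have := z_near m; rewrite !(vdist_sym (phi f y u m)); lra.
Qed.

(* Where the controller offers no pair, the state already lies in X_F: its
   nearest abstract point cannot have a positive level, since a point of
   Pre(P^(j)) provides a pair of C~. *)
Lemma stuck_in_target y : PSet y -> (forall u m, ~ Ctrl y u m) -> XF y.
Proof.
move=> PS_y no_pair; have [xt near_xt] := nearest_exists PS_y.
have [Pt_xt _] := near_xt.
have [k0 Pk0] := Pt_xt; have [k [Ek _]] := level_le Pk0.
have [Pk k_min] := level_spec Ek.
case: k Ek Pk k_min => [|j] Ek /= Pk k_min.
  by have [[_ xt_int] _] := Pk; apply: xt_int; exact: nearest_close PS_y near_xt.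
case: Pk => [Pj | [_ [u [m [u_grid [m_ge1 [m_le [succ_Pj OA_safe]]]]]]]].
  by have := k_min j Pj; lia.
case: (no_pair u m); split=> //; exists xt; split=> //.
do 5 (split=> //); move=> xp /succ_Pj Pj_xp; rewrite Ek.
by have [j' [-> j'_le]] := level_le Pj_xp; rewrite /=; lia.
Qed.

Section Execution.

Variables (X0 : vec nx -> Prop) (x : nat -> vec nx) (kk : nat -> nat)
  (us : nat -> vec nu) (ms : nat -> nat) (T : option nat).

Hypothesis hX0PS : forall x0, X0 x0 -> PSet x0.
Hypothesis hexec : controlled_traj f Ctrl X0 x kk us ms T.

Lemma round_follows_phi l : executed T l ->
  forall p, Peano.le p (ms l) -> x (kk l + p)%nat = phi f (x (kk l)) (us l) p.
Proof.
have [_ [_ [rounds _]]] := hexec; move=> /rounds [_ [k_next dyn]].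
elim=> [|p IH] p_le; first by rewrite addn0.
by rewrite addnS /= -IH; [apply: dyn; lia | lia].
Qed.

Lemma execution_round l xt : executed T l ->
  Nearest Pt (x (kk l)) xt -> Ct xt (us l) (ms l) ->
  (forall k, Peano.le (kk l) k -> Peano.le k (kk (S l)) -> XS (x k)) /\
  PSet (x (kk (S l))) /\
  (forall xt', Nearest Pt (x (kk (S l))) xt' -> lvl_lt (level Pit xt') (level Pit xt)).
Proof.
move=> exec_l near_xt Ct_xt; have [_ [_ [rounds _]]] := hexec.
have [[PS_l _] [k_next _]] := rounds l exec_l.
have [safe [PS_next lower]] := round_step PS_l near_xt Ct_xt.
have at_end : x (kk (S l)) = phi f (x (kk l)) (us l) (ms l).
  by rewrite k_next; apply: round_follows_phi.
rewrite at_end; split=> // k k_ge k_le.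
have -> : k = (kk l + (k - kk l))%nat by lia.
case E : (k - kk l)%nat => [|p]; first by rewrite addn0; case: PS_l.
rewrite round_follows_phi //; [apply: safe | ]; lia.
Qed.

Lemma round_choice l : executed T l ->
  exists xt, Nearest Pt (x (kk l)) xt /\ Ct xt (us l) (ms l).
Proof. by have [_ [_ [rounds _]]] := hexec; move=> /rounds [[_ choice] _]. Qed.

(* Levels strictly decrease from round to round, so there are finitely many
   rounds. *)
Lemma execution_finite : exists t, T = Some t.
Proof.
case E : T => [t | ]; first by exists t.
have exec l : executed T l by rewrite E.
suff no_round j : forall l xt, level Pit xt = Some j ->
    Nearest Pt (x (kk l)) xt -> Ct xt (us l) (ms l) -> False.
  have [xt [near_xt Ct_xt]] := round_choice (exec 0%nat).
  have [[k Pk] _] := near_xt; have [j [Ej _]] := level_le Pk.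
  by case: (no_round j 0%nat xt Ej near_xt Ct_xt).
elim/lt_wf_ind: j => j IH l xt Ej near_xt Ct_xt.
have [_ [_ lower]] := execution_round (exec l) near_xt Ct_xt.
have [xt' [near_xt' Ct_xt']] := round_choice (exec (S l)).
have := lower xt' near_xt'; rewrite Ej.
case Ej' : (level Pit xt') => [j'|] //= j'_lt.
exact: IH j' j'_lt (S l) xt' Ej' near_xt' Ct_xt'.
Qed.

Lemma execution_end_in_PS t : T = Some t -> PSet (x (kk t)).
Proof.
move=> Tt; have [x0_X0 [k0 _]] := hexec.
case: t Tt => [|l] Tt; first by rewrite k0; exact: hX0PS.
have exec_l : executed T l by rewrite Tt /=; lia.
have [xt [near_xt Ct_xt]] := round_choice exec_l.
by have [_ [PS_next _]] := execution_round exec_l near_xt Ct_xt.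
Qed.

Lemma execution_safe t : T = Some t -> forall k, Peano.le k (kk t) -> XS (x k).
Proof.
move=> Tt; have [x0_X0 [k0 _]] := hexec.
have : Peano.le t t by [].
elim: {1 3}t => [|l IH] l_le k k_le.
  have -> : k = 0%nat by rewrite k0 in k_le; lia.
  by case: (hX0PS x0_X0).
have exec_l : executed T l by rewrite Tt /=; lia.
have [xt [near_xt Ct_xt]] := round_choice exec_l.
have [safe _] := execution_round exec_l near_xt Ct_xt.
case: (Nat.le_gt_cases k (kk l)) => k_l; first by apply: IH => //; lia.
by apply: safe => //; lia.
Qed.

End Execution.

End Controller.

Theorem theorem1
  (nx nu : nat) (f : vec nx -> vec nu -> vec nx)
  (X0 : vec nx -> Prop) (U : vec nu -> Prop) (XS XF : vec nx -> Prop)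
  (Lx etax etau eps : R) (Mmax : nat)
  (hX0 : compact_set X0) (hU : compact_set U) (hXS : compact_set XS) (hXF : compact_set XF)
  (hX0S : forall x, X0 x -> XS x) (hXFS : forall x, XF x -> XS x)
  (hLx : 0 <= Lx)
  (hLip : forall x1 x2 u, U u -> vdist (f x1 u) (f x2 u) <= Lx * vdist x1 x2)
  (hetax : 0 < etax) (hetau : 0 < etau) (hMmax : Peano.le 1 Mmax)
  (heps : etax <= eps)
  (hX0PS : forall x, X0 x -> PS f Lx etax etau eps Mmax U XS XF x) :
  valid f (Cctrl f Lx etax etau eps Mmax U XS XF) X0 XS XF.
Proof.
move=> x kk us ms T exec.
have [t Tt] := execution_finite hLx hLip hetax heps exec.
exists t; split; first by move=> t'; rewrite Tt => -[<-].
split; last exact: (execution_safe hLx hLip hetax heps hX0PS exec Tt).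
apply: (stuck_in_target hetax (execution_end_in_PS hLx hLip hetax heps hX0PS exec Tt)).
by have [_ [_ [_ stuck]]] := exec; exact: stuck t Tt.
Qed.
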